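(* Let $(X,d,\mu)$ be as in the context (no doubling assumed), $x\in X$, and $q,R_0>0$. Then $q\in\underline{Q}_0(x)$ if and only if there is $C>0$ with $\mu(B_r)/\mu(B_R)\le C(r/R)^q$ for all $0<r<R\le R_0$; similarly $q\in\overline{Q}_0(x)$ if and only if there is $C>0$ with $\mu(B_r)/\mu(B_R)\ge C(r/R)^q$ for all $0<r<R\le R_0$. Assume furthermore that $f(r):=\mu(B_r)$ is locally absolutely continuous on $(0,\infty)$, and let $\underline{q}=\operatorname{ess\,lim\,inf}_{r\to0} rf'(r)/f(r)$ and $\overline{q}=\operatorname{ess\,lim\,sup}_{r\to0}rf'(r)/f(r)$. Then $(0,\underline{q})\subset\underline{Q}_0(x)\subset(0,\overline{q}]$ and $(\overline{q},\infty)\subset\overline{Q}_0(x)\subset[\underline{q},\infty)$.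
   Context: $(X,d,\mu)$ is a metric space with a positive complete Borel measure $\mu$ such that $0<\mu(B)<\infty$ for every ball $B$; $B_r=B(x,r)$. $\underline{Q}_0(x)=\{q>0:\exists C_q,\ \mu(B_r)/\mu(B_R)\le C_q(r/R)^q\text{ for }0<r<R\le1\}$ and $\overline{Q}_0(x)=\{q>0:\exists C_q,\ \mu(B_r)/\mu(B_R)\ge C_q(r/R)^q\text{ for }0<r<R\le1\}$. *)

From Stdlib Require Import Reals Lra.
Open Scope R_scope.

Inductive ER : Type := Fin (r : R) | PInf | MInf.

Definition ER_le (x y : ER) : Prop :=
  match x, y with
  | MInf, _ => True
  | _, PInf => True
  | Fin a, Fin b => a <= b
  | _, _ => False
  end.
Definition ER_lt (x y : ER) : Prop := ER_le x y /\ x <> y.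

Definition ER_add (x y : ER) : ER :=
  match x, y with
  | Fin a, Fin b => Fin (a + b)
  | MInf, _ | _, MInf => MInf
  | _, _ => PInf
  end.

Fixpoint ER_psum (a : nat -> ER) (n : nat) : ER :=
  match n with O => Fin 0 | S m => ER_add (ER_psum a m) (a m) end.

Definition is_sup (S : ER -> Prop) (L : ER) : Prop :=
  (forall e, S e -> ER_le e L) /\
  (forall M, (forall e, S e -> ER_le e M) -> ER_le L M).
Definition is_inf (S : ER -> Prop) (L : ER) : Prop :=
  (forall e, S e -> ER_le L e) /\
  (forall M, (forall e, S e -> ER_le M e) -> ER_le M L).

Definition is_metric {X : Type} (d : X -> X -> R) : Prop :=
  (forall x y, 0 <= d x y) /\ (forall x y, d x y = 0 <-> x = y) /\
  (forall x y, d x y = d y x) /\ (forall x y z, d x z <= d x y + d y z).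

Definition ball {X : Type} (d : X -> X -> R) (x : X) (r : R) : X -> Prop :=
  fun y => d x y < r.

Definition is_open {X : Type} (d : X -> X -> R) (U : X -> Prop) : Prop :=
  forall y, U y -> exists e, 0 < e /\ forall z, d y z < e -> U z.

Definition is_sigma_algebra {X : Type} (M : (X -> Prop) -> Prop) : Prop :=
  M (fun _ => True) /\
  (forall A, M A -> M (fun y => ~ A y)) /\
  (forall A : nat -> X -> Prop, (forall n, M (A n)) -> M (fun y => exists n, A n y)).

Definition is_measure {X : Type} (M : (X -> Prop) -> Prop) (mu : (X -> Prop) -> ER) : Prop :=
  is_sigma_algebra M /\
  mu (fun _ => False) = Fin 0 /\
  (forall A, M A -> ER_le (Fin 0) (mu A)) /\
  (forall A : nat -> X -> Prop,
     (forall n, M (A n)) ->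
     (forall n m y, n <> m -> A n y -> A m y -> False) ->
     is_sup (fun e => exists n, e = ER_psum (fun k => mu (A k)) n)
            (mu (fun y => exists n, A n y))).

Definition is_complete_borel_measure {X : Type} (d : X -> X -> R)
  (M : (X -> Prop) -> Prop) (mu : (X -> Prop) -> ER) : Prop :=
  is_measure M mu /\
  (forall U, is_open d U -> M U) /\
  (forall A N, M N -> mu N = Fin 0 -> (forall y, A y -> N y) -> M A).

Definition balls_pos_finite {X : Type} (d : X -> X -> R) (mu : (X -> Prop) -> ER) : Prop :=
  forall x r, 0 < r -> exists v, mu (ball d x r) = Fin v /\ 0 < v.

(* f(r) = mu(B(x,r)) as a real number (finite by assumption) *)
Definition ball_meas {X : Type} (d : X -> X -> R) (mu : (X -> Prop) -> ER) (x : X) (r : R) : R :=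
  match mu (ball d x r) with Fin v => v | _ => 0 end.

Definition Qlow {X : Type} (d : X -> X -> R) (mu : (X -> Prop) -> ER) (x : X) (q : R) : Prop :=
  0 < q /\ exists C, 0 < C /\ forall r R0, 0 < r -> r < R0 -> R0 <= 1 ->
    ball_meas d mu x r / ball_meas d mu x R0 <= C * Rpower (r / R0) q.

Definition Qup {X : Type} (d : X -> X -> R) (mu : (X -> Prop) -> ER) (x : X) (q : R) : Prop :=
  0 < q /\ exists C, 0 < C /\ forall r R0, 0 < r -> r < R0 -> R0 <= 1 ->
    ball_meas d mu x r / ball_meas d mu x R0 >= C * Rpower (r / R0) q.

Fixpoint psum (g : nat -> R) (n : nat) : R :=
  match n with O => 0 | S m => psum g m + g m end.

Definition abs_cont_on (f : R -> R) (a b : R) : Prop :=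
  forall eps, 0 < eps -> exists del, 0 < del /\
    forall (n : nat) (u v : nat -> R),
      (forall i, (i < n)%nat -> a <= u i /\ u i <= v i /\ v i <= b) ->
      (forall i, (S i < n)%nat -> v i <= u (S i)) ->
      psum (fun i => v i - u i) n < del ->
      psum (fun i => Rabs (f (v i) - f (u i))) n < eps.

Definition loc_abs_cont (f : R -> R) : Prop :=
  forall a b, 0 < a -> a < b -> abs_cont_on f a b.

Definition lnull (N : R -> Prop) : Prop :=
  forall eps, 0 < eps -> exists c e : nat -> R,
    (forall k, c k <= e k) /\
    (forall r, N r -> exists k, c k < r /\ r < e k) /\
    (forall n, psum (fun k => e k - c k) n <= eps).

(* g(r) = r f'(r)/f(r) >= t for a.e. r in (0,del), for some del > 0
   (points where f is not differentiable count as exceptional) *)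
Definition ess_ge_near0 (f : R -> R) (t : R) : Prop :=
  exists del, 0 < del /\
    lnull (fun r => 0 < r /\ r < del /\
             ~ (exists l, derivable_pt_lim f r l /\ t <= r * l / f r)).
Definition ess_le_near0 (f : R -> R) (t : R) : Prop :=
  exists del, 0 < del /\
    lnull (fun r => 0 < r /\ r < del /\
             ~ (exists l, derivable_pt_lim f r l /\ r * l / f r <= t)).

Definition is_ess_liminf (f : R -> R) (L : ER) : Prop :=
  is_sup (fun e => exists t, e = Fin t /\ ess_ge_near0 f t) L.
Definition is_ess_limsup (f : R -> R) (U : ER) : Prop :=
  is_inf (fun e => exists t, e = Fin t /\ ess_le_near0 f t) U.

From Stdlib Require Import Reals Lra Lia Classical FunctionalExtensionality PropExtensionality.
Open Scope R_scope.

(* Write f r = mu(B(x, r)).  The proof rests on three general facts.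

   1. Scale invariance.  For a positive nondecreasing f and an exponent q >= 0,
      a bound f(r)/f(R) <= C (r/R)^q (resp. >= C (r/R)^q) for 0 < r < R <= A
      persists, with a new constant, when A is replaced by any other B > 0.
      This gives the first two equivalences (scales 1 and R0).
   2. Monotonicity criterion.  An absolutely continuous function whose
      derivative exists and is nonnegative outside a Lebesgue null set is
      nondecreasing; it is proved by real induction, absorbing the null set in
      a cover of small total length.
   3. Applied to s f(x) x^(-t) with s = +1 or -1, the criterion turns an
      essential bound r f'(r)/f(r) >= t (resp. <= t) near 0 into the bound
      f(r)/f(R) <= (r/R)^t (resp. >= (r/R)^t) for small radii.
   Since an upper bound with exponent p and a lower bound with an exponent
   t < p are incompatible, the inclusions between Qlow, Qup and the essential
   lower and upper limits follow by comparing exponents. *)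

Lemma psum_ext (g h : nat -> R) (n : nat) :
  (forall i, (i < n)%nat -> g i = h i) -> psum g n = psum h n.
Proof.
  induction n as [|n IH]; intros Hgh; simpl; [reflexivity|].
  rewrite IH by (intros; apply Hgh; lia). rewrite (Hgh n) by lia. reflexivity.
Qed.

Lemma psum_le (g h : nat -> R) (n : nat) :
  (forall i, (i < n)%nat -> g i <= h i) -> psum g n <= psum h n.
Proof.
  induction n as [|n IH]; intros Hgh; simpl; [lra|].
  assert (g n <= h n) by (apply Hgh; lia).
  assert (psum g n <= psum h n) by (apply IH; intros; apply Hgh; lia).
  lra.
Qed.

Lemma psum_nonneg (g : nat -> R) (n : nat) :
  (forall i, (i < n)%nat -> 0 <= g i) -> 0 <= psum g n.
Proof.
  induction n as [|n IH]; intros Hg; simpl; [lra|].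
  assert (0 <= g n) by (apply Hg; lia).
  assert (0 <= psum g n) by (apply IH; intros; apply Hg; lia).
  lra.
Qed.

Lemma psum_lin (a b : R) (g h : nat -> R) (n : nat) :
  psum (fun i => a * g i + b * h i) n = a * psum g n + b * psum h n.
Proof. induction n as [|n IH]; simpl; [ring|]. rewrite IH; ring. Qed.

Lemma psum_mono_len (g : nat -> R) (n m : nat) :
  (forall i, 0 <= g i) -> (n <= m)%nat -> psum g n <= psum g m.
Proof. intros Hg Hnm. induction Hnm; simpl; [lra|]. specialize (Hg m). lra. Qed.

Lemma psum_le_one_term (g h : nat -> R) (K j : nat) :
  (forall k, g k <= h k) -> (j < K)%nat -> psum g K + (h j - g j) <= psum h K.
Proof.
  induction K as [|K IH]; simpl; intros Hgh Hj; [lia|].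
  destruct (Nat.eq_dec j K) as [->|Hne].
  - assert (psum g K <= psum h K) by (apply psum_le; auto). lra.
  - assert (psum g K + (h j - g j) <= psum h K) by (apply IH; auto; lia).
    specialize (Hgh K). lra.
Qed.

Definition nonoverlapping (a b : R) (n : nat) (u v : nat -> R) : Prop :=
  (forall i, (i < n)%nat -> a <= u i /\ u i <= v i /\ v i <= b) /\
  (forall i, (S i < n)%nat -> v i <= u (S i)).

Definition total_length (n : nat) (u v : nat -> R) : R := psum (fun i => v i - u i) n.

Definition variation (F : R -> R) (n : nat) (u v : nat -> R) : R :=
  psum (fun i => Rabs (F (v i) - F (u i))) n.

Lemma nonoverlapping_widen (a b b' : R) (n : nat) (u v : nat -> R) :
  b <= b' -> nonoverlapping a b n u v -> nonoverlapping a b' n u v.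
Proof.
  intros Hb [Hin Hord]. split; [|exact Hord].
  intros i Hi. destruct (Hin i Hi) as (? & ? & ?). repeat split; lra.
Qed.

Definition snoc (w : nat -> R) (n : nat) (z : R) : nat -> R :=
  fun i => if Nat.ltb i n then w i else z.

Lemma psum_snoc (h : R -> R -> R) (n : nat) (u v : nat -> R) (x y : R) :
  psum (fun i => h (snoc u n x i) (snoc v n y i)) (S n) =
  psum (fun i => h (u i) (v i)) n + h x y.
Proof.
  cbn [psum]. f_equal.
  - apply psum_ext. intros i Hi. unfold snoc.
    apply Nat.ltb_lt in Hi. now rewrite Hi.
  - unfold snoc. now rewrite Nat.ltb_irrefl.
Qed.

Lemma nonoverlapping_snoc (a x y : R) (n : nat) (u v : nat -> R) :
  a <= x -> x <= y -> nonoverlapping a x n u v ->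
  nonoverlapping a y (S n) (snoc u n x) (snoc v n y).
Proof.
  intros Hax Hxy [Hin Hord]. unfold snoc. split.
  - intros i Hi. destruct (Nat.ltb_spec i n) as [Hlt|Hge].
    + destruct (Hin i Hlt) as (? & ? & ?). repeat split; lra.
    + repeat split; lra.
  - intros i Hi. destruct (Nat.ltb_spec i n), (Nat.ltb_spec (S i) n); try lia.
    + now apply Hord.
    + replace i with (n - 1)%nat by lia.
      destruct (Hin (n - 1)%nat ltac:(lia)) as (? & ? & ?). lra.
Qed.

(* Length of the part of the interval (c k, e k) lying to the left of x, and
   the total such length for the first K intervals of a cover. *)
Definition cover_upto (c e : nat -> R) (k : nat) (x : R) : R :=
  Rmax 0 (Rmin (e k) x - c k).

Definition covered (c e : nat -> R) (K : nat) (x : R) : R :=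
  psum (fun k => cover_upto c e k x) K.

Lemma cover_upto_nonneg (c e : nat -> R) (k : nat) (x : R) : 0 <= cover_upto c e k x.
Proof. apply Rmax_l. Qed.

Lemma cover_upto_mono (c e : nat -> R) (k : nat) (x y : R) :
  x <= y -> cover_upto c e k x <= cover_upto c e k y.
Proof. unfold cover_upto, Rmax, Rmin; intros; repeat destruct Rle_dec; lra. Qed.

Lemma covered_mono (c e : nat -> R) (K : nat) (x y : R) :
  x <= y -> covered c e K x <= covered c e K y.
Proof. intros Hxy. apply psum_le. intros k _. now apply cover_upto_mono. Qed.

Lemma covered_more (c e : nat -> R) (K K' : nat) (x : R) :
  (K <= K')%nat -> covered c e K x <= covered c e K' x.
Proof. intros HK. apply psum_mono_len; [intros; apply cover_upto_nonneg | exact HK]. Qed.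

Lemma covered_step (c e : nat -> R) (K k : nat) (x y : R) :
  (k < K)%nat -> c k < x -> x <= y -> y < e k ->
  covered c e K x + (y - x) <= covered c e K y.
Proof.
  intros Hk Hcx Hxy Hye.
  replace (y - x) with (cover_upto c e k y - cover_upto c e k x)
    by (unfold cover_upto, Rmax, Rmin; repeat destruct Rle_dec; lra).
  apply (psum_le_one_term (fun j => cover_upto c e j x) (fun j => cover_upto c e j y));
    [intros; now apply cover_upto_mono | exact Hk].
Qed.

Lemma covered_le_cover_length (c e : nat -> R) (K : nat) (x : R) :
  (forall k, c k <= e k) -> covered c e K x <= psum (fun k => e k - c k) K.
Proof.
  intros Hce. apply psum_le. intros k _. specialize (Hce k).
  unfold cover_upto, Rmax, Rmin; repeat destruct Rle_dec; lra.
Qed.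

Lemma real_induction (P : R -> Prop) (a b : R) :
  a <= b -> P a ->
  (forall s, a <= s <= b -> exists dl, 0 < dl /\
     forall x y, a <= x -> s - dl < x <= s -> s <= y <= b -> y < s + dl -> P x -> P y) ->
  P b.
Proof.
  intros Hab Ha Hstep.
  set (E := fun x => a <= x <= b /\ P x).
  assert (HEb : bound E) by (exists b; intros x [Hx _]; lra).
  assert (HEa : E a) by (split; [lra | exact Ha]).
  destruct (completeness E HEb (ex_intro _ a HEa)) as [s [Hub Hlub]].
  assert (Has : a <= s) by (apply Hub, HEa).
  assert (Hsb : s <= b) by (apply Hlub; intros x [Hx _]; lra).
  destruct (Hstep s (conj Has Hsb)) as [dl [Hdl Hprop]].
  assert (Hnear : exists x, E x /\ s - dl < x).
  { apply NNPP; intros Hno.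
    assert (s <= s - dl); [|lra].
    apply Hlub; intros x Hx. apply Rnot_lt_le; intros Hlt. apply Hno; eauto. }
  destruct Hnear as [x [[Hx HPx] Hxs]].
  assert (Hxs' : x <= s) by (apply Hub; split; assumption).
  set (y := Rmin (s + dl / 2) b).
  assert (Hy : s <= y <= b /\ y < s + dl) by (unfold y, Rmin; destruct Rle_dec; lra).
  assert (HPy : P y) by (apply (Hprop x y); lra || assumption).
  assert (y <= s) by (apply Hub; split; [lra | exact HPy]).
  replace b with y by (unfold y in *; unfold Rmin in *; destruct Rle_dec; lra).
  exact HPy.
Qed.

Lemma tangent_approx (F : R -> R) (s l eps : R) :
  derivable_pt_lim F s l -> 0 < eps ->
  exists dl, 0 < dl /\ forall z, Rabs (z - s) < dl ->
    l * (z - s) - eps * Rabs (z - s) <= F z - F s <= l * (z - s) + eps * Rabs (z - s).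
Proof.
  intros Hd Heps. destruct (Hd eps Heps) as [[dl Hdl] Hquot]. simpl in Hquot.
  exists dl; split; [exact Hdl|]. intros z Hz.
  destruct (Req_dec z s) as [->|Hne].
  { replace (s - s) with 0 by ring. rewrite Rabs_R0. lra. }
  specialize (Hquot (z - s) ltac:(lra) Hz). replace (s + (z - s)) with z in Hquot by ring.
  assert (Habs : Rabs (F z - F s - l * (z - s)) <= eps * Rabs (z - s)).
  { replace (F z - F s - l * (z - s)) with (((F z - F s) / (z - s) - l) * (z - s))
      by (field; lra).
    rewrite Rabs_mult. apply Rmult_le_compat_r; [apply Rabs_pos | lra]. }
  pose proof (Rle_abs (F z - F s - l * (z - s))).
  pose proof (Rle_abs (- (F z - F s - l * (z - s)))). rewrite Rabs_Ropp in *. lra.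
Qed.

Lemma nonneg_deriv_increment (F : R -> R) (s l eps : R) :
  derivable_pt_lim F s l -> 0 <= l -> 0 < eps ->
  exists dl, 0 < dl /\ forall x y, s - dl < x <= s -> s <= y < s + dl ->
    F y - F x >= - eps * (y - x).
Proof.
  intros Hd Hl Heps. destruct (tangent_approx F s l eps Hd Heps) as [dl [Hdl Htan]].
  exists dl; split; [exact Hdl|]. intros x y Hx Hy.
  assert (Hright := Htan y ltac:(rewrite Rabs_right; lra)).
  assert (Hleft := Htan x ltac:(rewrite Rabs_left1; lra)).
  rewrite Rabs_right in Hright by lra. rewrite Rabs_left1 in Hleft by lra.
  assert (0 <= l * (y - s)) by (apply Rmult_le_pos; lra).
  assert (0 <= l * (s - x)) by (apply Rmult_le_pos; lra).
  nra.
Qed.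

Section NonnegativeDerivative.

(* F is the function under study, starting at a; the intervals (c k, e k)
   cover the exceptional null set, and eps is the tolerated negative slope. *)
Variables (F : R -> R) (a : R) (eps : R) (c e : nat -> R).

(* Invariant of the real induction: up to x, F decreased by at most eps per
   unit length plus its variation on a non-overlapping family of intervals
   whose total length is bounded by the covered length up to x. *)
Definition controlled (x : R) : Prop :=
  exists n u v K, nonoverlapping a x n u v /\
    total_length n u v <= covered c e K x /\
    F x - F a >= - eps * (x - a) - variation F n u v.

Lemma controlled_start : controlled a.
Proof.
  exists 0%nat, (fun _ => 0), (fun _ => 0), 0%nat.
  unfold nonoverlapping, total_length, variation, covered; simpl.
  repeat split; intros; try lia; lra.
Qed.

(* Across a piece [x, y] of a cover interval: record [x, y] in the family. *)
Lemma controlled_cover_step (k : nat) (x y : R) :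
  0 <= eps -> a <= x -> c k < x -> x <= y -> y < e k -> controlled x -> controlled y.
Proof.
  intros Heps Hax Hcx Hxy Hye (n & u & v & K & Hfam & Hlen & Hinc).
  exists (S n), (snoc u n x), (snoc v n y), (Nat.max K (S k)).
  split; [|split].
  - now apply nonoverlapping_snoc.
  - unfold total_length. rewrite (psum_snoc (fun p q => q - p)).
    assert (covered c e K x <= covered c e (Nat.max K (S k)) x) by (apply covered_more; lia).
    assert (covered c e (Nat.max K (S k)) x + (y - x) <= covered c e (Nat.max K (S k)) y)
      by (apply (covered_step c e _ k); lia || lra).
    unfold total_length in Hlen. lra.
  - unfold variation. rewrite (psum_snoc (fun p q => Rabs (F q - F p))).
    unfold variation in Hinc.
    pose proof (Rle_abs (- (F y - F x))). rewrite Rabs_Ropp in *.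
    assert (eps * (x - a) <= eps * (y - a)) by (apply Rmult_le_compat_l; lra).
    lra.
Qed.

(* Across [x, y] where F does not drop faster than eps: keep the family. *)
Lemma controlled_slope_step (x y : R) :
  x <= y -> F y - F x >= - eps * (y - x) -> controlled x -> controlled y.
Proof.
  intros Hxy Hslope (n & u & v & K & Hfam & Hlen & Hinc).
  exists n, u, v, K. split; [|split].
  - now apply (nonoverlapping_widen a x y).
  - pose proof (covered_mono c e K x y Hxy). lra.
  - lra.
Qed.

End NonnegativeDerivative.

Lemma ac_nonneg_deriv_mono (F : R -> R) (N : R -> Prop) (a b : R) :
  a <= b -> abs_cont_on F a b -> lnull N ->
  (forall r, a <= r <= b -> ~ N r -> exists l, derivable_pt_lim F r l /\ 0 <= l) ->
  F a <= F b.
Proof.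
  intros Hab Hac Hnull Hderiv.
  assert (Happrox : forall eps, 0 < eps -> F b - F a >= - eps * (b - a) - eps).
  { intros eps Heps.
    destruct (Hac eps Heps) as [del [Hdel Hsmall]].
    destruct (Hnull (del / 2) ltac:(lra)) as (c & e & Hce & Hcov & Hlen).
    assert (Hb : controlled F a eps c e b).
    { apply (real_induction (controlled F a eps c e) a b); [exact Hab | apply controlled_start |].
      intros s Hs. destruct (classic (N s)) as [HN|HN].
      - destruct (Hcov s HN) as [k [Hck Hek]].
        exists (Rmin (s - c k) (e k - s)).
        split; [apply Rmin_glb_lt; lra|]. intros x y Hax Hx Hy Hy' Hctl.
        pose proof (Rmin_l (s - c k) (e k - s)). pose proof (Rmin_r (s - c k) (e k - s)).
        apply (controlled_cover_step F a eps c e k x y); lra || assumption.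
      - destruct (Hderiv s Hs HN) as [l [Hl Hl0]].
        destruct (nonneg_deriv_increment F s l eps Hl Hl0 Heps) as [dl [Hdl Hinc]].
        exists dl; split; [exact Hdl|]. intros x y Hax Hx Hy Hy' Hctl.
        apply (controlled_slope_step F a eps c e x y); [lra | apply Hinc; lra | exact Hctl]. }
    destruct Hb as (n & u & v & K & [Hin Hord] & Hlenb & Hincb).
    assert (variation F n u v < eps).
    { apply Hsmall; [exact Hin | exact Hord |].
      pose proof (covered_le_cover_length c e K b Hce). specialize (Hlen K).
      unfold total_length in Hlenb. lra. }
    lra. }
  apply Rnot_lt_le; intros Hlt.
  set (eps := (F a - F b) / (2 * (b - a + 1))).
  assert (Heps : 0 < eps) by (apply Rdiv_lt_0_compat; lra).
  specialize (Happrox eps Heps).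
  assert (eps * (b - a + 1) = (F a - F b) / 2) by (unfold eps; field; lra).
  lra.
Qed.

Lemma pred_ext {X : Type} (P Q : X -> Prop) : (forall y, P y <-> Q y) -> P = Q.
Proof.
  intros H. apply functional_extensionality. intros y.
  now apply propositional_extensionality.
Qed.

Lemma ball_open {X : Type} (d : X -> X -> R) (x : X) (r : R) :
  is_metric d -> is_open d (ball d x r).
Proof.
  intros (_ & _ & _ & Htri) y Hy. unfold ball in *. exists (r - d x y). split; [lra|].
  intros z Hz. specialize (Htri x y z). lra.
Qed.

Lemma sigma_empty {X : Type} (M : (X -> Prop) -> Prop) :
  is_sigma_algebra M -> M (fun _ => False).
Proof.
  intros (HT & HC & _). replace (fun _ : X => False) with (fun y : X => ~ True).
  - apply HC, HT.
  - apply pred_ext; tauto.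
Qed.

Lemma sigma_union2 {X : Type} (M : (X -> Prop) -> Prop) (A B : X -> Prop) :
  is_sigma_algebra M -> M A -> M B -> M (fun y => A y \/ B y).
Proof.
  intros (_ & _ & HU) HA HB.
  set (G := fun n : nat => match n with O => A | _ => B end).
  replace (fun y => A y \/ B y) with (fun y => exists n, G n y).
  - apply HU. intros [|n]; assumption.
  - apply pred_ext; intros y; split.
    + intros [[|n] Hn]; simpl in Hn; auto.
    + intros [Hy|Hy]; [exists O | exists 1%nat]; exact Hy.
Qed.

Lemma sigma_diff {X : Type} (M : (X -> Prop) -> Prop) (A B : X -> Prop) :
  is_sigma_algebra M -> M A -> M B -> M (fun y => B y /\ ~ A y).
Proof.
  intros HS HA HB. pose proof HS as (_ & HC & _).
  replace (fun y => B y /\ ~ A y) with (fun y => ~ (~ B y \/ A y)).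
  - apply HC, sigma_union2; auto.
  - apply pred_ext; intros y; split; [|tauto].
    intros Hn; split; [apply NNPP|]; tauto.
Qed.

(* Monotonicity of a measure, from additivity on A, B \ A, and empty sets. *)
Lemma measure_mono {X : Type} (M : (X -> Prop) -> Prop) (mu : (X -> Prop) -> ER)
    (A B : X -> Prop) (a b : R) :
  is_measure M mu -> M A -> M B -> (forall y, A y -> B y) ->
  mu A = Fin a -> mu B = Fin b -> a <= b.
Proof.
  intros (HS & _ & Hpos & Hadd) HA HB Hsub Ha Hb.
  set (G := fun n : nat => match n with
                           | O => A | 1%nat => (fun y => B y /\ ~ A y) | _ => (fun _ => False) end).
  assert (HG : forall n, M (G n)).
  { intros [|[|n]]; simpl; [exact HA | now apply sigma_diff | now apply sigma_empty]. }
  assert (Hdisj : forall n m y, n <> m -> G n y -> G m y -> False).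
  { intros [|[|n]] [|[|m]] y Hnm; simpl; tauto. }
  assert (Hunion : (fun y => exists n, G n y) = B).
  { apply pred_ext; intros y; split.
    - intros [[|[|n]] Hn]; simpl in Hn; [auto | tauto | tauto].
    - intros Hy. destruct (classic (A y)); [exists O | exists 1%nat]; simpl; auto. }
  destruct (Hadd G HG Hdisj) as [Hupper _]. rewrite Hunion, Hb in Hupper.
  specialize (Hupper _ (ex_intro _ 2%nat eq_refl)). simpl in Hupper. rewrite Ha in Hupper.
  specialize (Hpos _ (HG 1%nat)). simpl in Hpos.
  destruct (mu (fun y => B y /\ ~ A y)); simpl in *; try contradiction. lra.
Qed.

Lemma ball_meas_spec {X : Type} (d : X -> X -> R) (mu : (X -> Prop) -> ER) (x : X) (r : R) :
  balls_pos_finite d mu -> 0 < r ->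
  mu (ball d x r) = Fin (ball_meas d mu x r) /\ 0 < ball_meas d mu x r.
Proof.
  intros Hb Hr. destruct (Hb x r Hr) as [v [Hv Hv0]]. unfold ball_meas. now rewrite Hv.
Qed.

Lemma ball_meas_mono {X : Type} (d : X -> X -> R) (M : (X -> Prop) -> Prop)
    (mu : (X -> Prop) -> ER) (x : X) (r s : R) :
  is_metric d -> is_complete_borel_measure d M mu -> balls_pos_finite d mu ->
  0 < r -> r <= s -> ball_meas d mu x r <= ball_meas d mu x s.
Proof.
  intros Hd (Hm & Hopen & _) Hb Hr Hrs.
  apply (measure_mono M mu (ball d x r) (ball d x s)); auto.
  - apply Hopen, ball_open, Hd.
  - apply Hopen, ball_open, Hd.
  - unfold ball; intros; lra.
  - apply ball_meas_spec; auto.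
  - apply ball_meas_spec; auto; lra.
Qed.

Lemma Rpower_pos (x q : R) : 0 < Rpower x q.
Proof. apply exp_pos. Qed.

Lemma exp_le_mono (x y : R) : x <= y -> exp x <= exp y.
Proof. intros [Hlt| ->]; [left; now apply exp_increasing | lra]. Qed.

Lemma ln_le_mono (x y : R) : 0 < x -> x <= y -> ln x <= ln y.
Proof. intros Hx [Hlt| ->]; [left; now apply ln_increasing | lra]. Qed.

Lemma Rpower_base_1 (q : R) : Rpower 1 q = 1.
Proof. unfold Rpower. now rewrite ln_1, Rmult_0_r, exp_0. Qed.

Lemma Rpower_le_1 (x q : R) : 0 < x -> x <= 1 -> 0 <= q -> Rpower x q <= 1.
Proof. intros. rewrite <- (Rpower_base_1 q). apply Rle_Rpower_l; lra. Qed.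

Lemma Rpower_ge_1 (x q : R) : 1 <= x -> 0 <= q -> 1 <= Rpower x q.
Proof. intros. rewrite <- (Rpower_O x) by lra. now apply Rle_Rpower. Qed.

Lemma Rpower_exp_antitone (x p t : R) : 0 < x -> x <= 1 -> p <= t -> Rpower x t <= Rpower x p.
Proof.
  intros Hx Hx1 Hpt. unfold Rpower. apply exp_le_mono.
  assert (ln x <= 0) by (rewrite <- ln_1; now apply ln_le_mono). nra.
Qed.

Lemma Rpower_div (r R t : R) : 0 < r -> 0 < R -> Rpower (r / R) t = Rpower r t / Rpower R t.
Proof.
  intros Hr HR. unfold Rpower, Rdiv.
  rewrite ln_mult, ln_Rinv by (auto; now apply Rinv_0_lt_compat).
  rewrite Rmult_plus_distr_l, exp_plus, <- exp_Ropp. f_equal. f_equal. ring.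
Qed.

Lemma Rpower_between (a b c e : R) : 0 < a -> a <= c <= b -> Rpower c e <= Rpower a e + Rpower b e.
Proof.
  intros Ha Hc. pose proof (Rpower_pos a e). pose proof (Rpower_pos b e).
  destruct (Rle_dec 0 e).
  - assert (Rpower c e <= Rpower b e) by (apply Rle_Rpower_l; lra). lra.
  - assert (Rpower c e <= Rpower a e); [|lra].
    unfold Rpower. apply exp_le_mono.
    assert (ln a <= ln c) by (apply ln_le_mono; lra). nra.
Qed.

Lemma Rpower_lipschitz (a b e u v : R) : 0 < a -> a <= u -> u <= v -> v <= b ->
  Rabs (Rpower v e - Rpower u e) <= (Rabs e * (Rpower a (e - 1) + Rpower b (e - 1))) * (v - u).
Proof.
  intros Ha Hu Huv Hv. destruct Huv as [Hlt|Heq]; [|subst v].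
  - destruct (MVT_cor2 (fun y => Rpower y e) (fun y => e * Rpower y (e - 1)) u v Hlt)
      as [z [Hmvt Hz]].
    { intros z Hz. apply derivable_pt_lim_power. lra. }
    rewrite Hmvt, Rabs_mult, Rabs_mult, (Rabs_right (v - u)) by lra.
    apply Rmult_le_compat_r; [lra|]. apply Rmult_le_compat_l; [apply Rabs_pos|].
    rewrite Rabs_right by (left; apply Rpower_pos). apply Rpower_between; lra.
  - rewrite !Rminus_diag, Rabs_R0, Rmult_0_r. lra.
Qed.

Lemma power_gap (C p t : R) : 0 < C -> t < p ->
  exists s, 0 < s /\ s < 1 /\ C * Rpower s p < Rpower s t.
Proof.
  intros HC Htp. set (k := - (Rabs (ln C) + 1) / (p - t)).
  assert (Hk : k < 0) by (apply Rdiv_neg_pos; [pose proof (Rabs_pos (ln C)) |]; lra).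
  exists (exp k). split; [apply exp_pos|]. split.
  { rewrite <- exp_0. now apply exp_increasing. }
  unfold Rpower. rewrite ln_exp. rewrite <- (exp_ln C) at 1 by exact HC. rewrite <- exp_plus.
  apply exp_increasing.
  assert ((t - p) * k = Rabs (ln C) + 1) by (unfold k; field; lra).
  pose proof (Rle_abs (ln C)). nra.
Qed.

(* Upper and lower power bounds on the ratio f(r)/f(R) for radii below a scale A.
   For f r = mu(B(x, r)) and A = 1 these are the conditions defining
   [Qlow] and [Qup]. *)
Definition ratio_upper_bound (f : R -> R) (q A : R) : Prop :=
  exists C, 0 < C /\ forall r R, 0 < r -> r < R -> R <= A -> f r / f R <= C * Rpower (r / R) q.

Definition ratio_lower_bound (f : R -> R) (q A : R) : Prop :=
  exists C, 0 < C /\ forall r R, 0 < r -> r < R -> R <= A -> f r / f R >= C * Rpower (r / R) q.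

Lemma ratio_upper_restrict (f : R -> R) (q A B : R) :
  A <= B -> ratio_upper_bound f q B -> ratio_upper_bound f q A.
Proof. intros HAB [C [HC Hbd]]. exists C; split; [exact HC|]. intros; apply Hbd; lra. Qed.

Lemma ratio_lower_restrict (f : R -> R) (q A B : R) :
  A <= B -> ratio_lower_bound f q B -> ratio_lower_bound f q A.
Proof. intros HAB [C [HC Hbd]]. exists C; split; [exact HC|]. intros; apply Hbd; lra. Qed.

Lemma div_lt_1 (r R : R) : 0 < r -> r < R -> 0 < r / R < 1.
Proof.
  intros Hr HrR. split; [apply Rdiv_lt_0_compat; lra|].
  apply (Rmult_lt_reg_r R); [lra|]. unfold Rdiv. rewrite Rmult_assoc, Rinv_l; lra.
Qed.

(* Raising the exponent strengthens an upper bound; lowering it strengthens a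
   lower bound (the ratio r/R lies in (0, 1)). *)
Lemma ratio_upper_lower_exponent (f : R -> R) (p t A : R) :
  p <= t -> ratio_upper_bound f t A -> ratio_upper_bound f p A.
Proof.
  intros Hpt [C [HC Hbd]]. exists C; split; [exact HC|]. intros r R Hr HrR HRA.
  destruct (div_lt_1 r R Hr HrR).
  pose proof (Rpower_exp_antitone (r / R) p t ltac:(lra) ltac:(lra) Hpt).
  specialize (Hbd r R Hr HrR HRA). nra.
Qed.

Lemma ratio_lower_raise_exponent (f : R -> R) (p t A : R) :
  t <= p -> ratio_lower_bound f t A -> ratio_lower_bound f p A.
Proof.
  intros Htp [C [HC Hbd]]. exists C; split; [exact HC|]. intros r R Hr HrR HRA.
  destruct (div_lt_1 r R Hr HrR).
  pose proof (Rpower_exp_antitone (r / R) t p ltac:(lra) ltac:(lra) Htp).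
  specialize (Hbd r R Hr HrR HRA). nra.
Qed.

(* An upper bound with exponent p and a lower bound with a smaller exponent t
   cannot hold together: let r/R tend to 0. *)
Lemma ratio_bounds_incompatible (f : R -> R) (p t A : R) :
  0 < A -> t < p -> ratio_upper_bound f p A -> ratio_lower_bound f t A -> False.
Proof.
  intros HA Htp [C1 [HC1 Hup]] [C2 [HC2 Hlow]].
  destruct (power_gap (C1 / C2) p t ltac:(now apply Rdiv_lt_0_compat) Htp)
    as (s & Hs0 & Hs1 & Hgap).
  specialize (Hup (s * A) A ltac:(nra) ltac:(nra) ltac:(lra)).
  specialize (Hlow (s * A) A ltac:(nra) ltac:(nra) ltac:(lra)).
  replace (s * A / A) with s in Hup, Hlow by (field; lra).
  assert (C1 * Rpower s p < C2 * Rpower s t); [|lra].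
  apply (Rmult_lt_compat_l C2) in Hgap; [|exact HC2].
  replace (C2 * (C1 / C2 * Rpower s p)) with (C1 * Rpower s p) in Hgap by (field; lra).
  exact Hgap.
Qed.

Section MonotoneProfile.

Variable f : R -> R.
Hypothesis f_pos : forall r, 0 < r -> 0 < f r.
Hypothesis f_mono : forall r s, 0 < r -> r <= s -> f r <= f s.

Lemma ratio_le_1 (r R : R) : 0 < r -> r <= R -> f r / f R <= 1.
Proof.
  intros Hr HrR. pose proof (f_pos R ltac:(lra)).
  apply (Rmult_le_reg_r (f R)); [lra|]. unfold Rdiv.
  rewrite Rmult_assoc, Rinv_l, Rmult_1_r, Rmult_1_l by lra. now apply f_mono.
Qed.

Lemma ratio_le_shrink_den (r A R : R) : 0 < r -> 0 < A -> A <= R -> f r / f R <= f r / f A.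
Proof.
  intros Hr HA HAR. pose proof (f_pos r Hr). pose proof (f_pos A HA).
  unfold Rdiv. apply Rmult_le_compat_l; [lra|]. apply Rinv_le_contravar; [lra|]. now apply f_mono.
Qed.

Lemma ratio_upper_exponent_0 (A : R) : ratio_upper_bound f 0 A.
Proof.
  exists 1; split; [lra|]. intros r R Hr HrR _.
  rewrite Rmult_1_l, Rpower_O by (apply Rdiv_lt_0_compat; lra). apply ratio_le_1; lra.
Qed.

(* Passing to a larger scale B costs the factor (B/A)^q in the constant. *)
Lemma ratio_upper_extend (q A B : R) :
  0 <= q -> 0 < A -> A <= B -> ratio_upper_bound f q A -> ratio_upper_bound f q B.
Proof.
  intros Hq HA HAB [C [HC Hbd]].
  set (K := Rpower (B / A) q).
  assert (HK : 1 <= K).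
  { apply Rpower_ge_1; [|exact Hq]. apply (Rmult_le_reg_r A); [lra|].
    unfold Rdiv. rewrite Rmult_assoc, Rinv_l; lra. }
  exists ((C + 1) * K). split; [nra|]. intros r R Hr HrR HRB.
  pose proof (Rpower_pos (r / R) q).
  assert (HKr : forall z, 0 < z -> z <= B / A * (r / R) -> Rpower z q <= K * Rpower (r / R) q).
  { intros z Hz Hzle. unfold K. rewrite Rpower_mult_distr by (apply Rdiv_lt_0_compat; lra).
    apply Rle_Rpower_l; [exact Hq | split; assumption]. }
  destruct (Rle_dec R A) as [HRA|HAR].
  - specialize (Hbd r R Hr HrR HRA).
    assert (C * Rpower (r / R) q <= (C + 1) * K * Rpower (r / R) q)
      by (apply Rmult_le_compat_r; nra).
    lra.
  - destruct (Rle_dec A r) as [HAr|HrA].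
    + assert (1 <= K * Rpower (r / R) q).
      { rewrite <- (Rpower_base_1 q). apply HKr; [lra|].
        replace (B / A * (r / R)) with ((B * r) / (A * R)) by (field; lra).
        apply (Rmult_le_reg_r (A * R)); [nra|]. unfold Rdiv.
        rewrite Rmult_assoc, Rinv_l by nra. nra. }
      pose proof (ratio_le_1 r R Hr ltac:(lra)). nra.
    + specialize (Hbd r A Hr ltac:(lra) ltac:(lra)).
      assert (Rpower (r / A) q <= K * Rpower (r / R) q).
      { apply HKr; [apply Rdiv_lt_0_compat; lra|].
        replace (B / A * (r / R)) with (r / A * (B / R)) by (field; lra).
        rewrite <- (Rmult_1_r (r / A)) at 1. apply Rmult_le_compat_l.
        - apply Rlt_le, Rdiv_lt_0_compat; lra.
        - apply (Rmult_le_reg_r R); [lra|]. unfold Rdiv. rewrite Rmult_assoc, Rinv_l; lra. }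
      pose proof (ratio_le_shrink_den r A R Hr HA ltac:(lra)). nra.
Qed.

(* Passing to a larger scale B costs the factor f(A)/f(B) in the constant. *)
Lemma ratio_lower_extend (q A B : R) :
  0 <= q -> 0 < A -> A <= B -> ratio_lower_bound f q A -> ratio_lower_bound f q B.
Proof.
  intros Hq HA HAB [C [HC Hbd]].
  set (K := f A / f B).
  pose proof (f_pos A HA). pose proof (f_pos B ltac:(lra)).
  assert (HK0 : 0 < K) by (apply Rdiv_lt_0_compat; lra).
  assert (HK1 : K <= 1) by (apply ratio_le_1; lra).
  set (C' := Rmin C 1).
  assert (HC' : 0 < C' /\ C' <= C /\ C' <= 1)
    by (unfold C'; split; [apply Rmin_glb_lt; lra | split; [apply Rmin_l | apply Rmin_r]]).
  exists (C' * K). split; [nra|]. intros r R Hr HrR HRB.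
  pose proof (f_pos r Hr). pose proof (f_pos R ltac:(lra)).
  pose proof (Rpower_pos (r / R) q).
  destruct (div_lt_1 r R Hr HrR).
  destruct (Rle_dec R A) as [HRA|HAR].
  - specialize (Hbd r R Hr HrR HRA).
    assert (C' * K * Rpower (r / R) q <= C * Rpower (r / R) q)
      by (apply Rmult_le_compat_r; nra).
    lra.
  - assert (HKR : K <= f A / f R).
    { unfold K, Rdiv. apply Rmult_le_compat_l; [lra|]. apply Rinv_le_contravar; [lra|].
      apply f_mono; lra. }
    destruct (Rle_dec A r) as [HAr|HrA].
    + assert (K <= f r / f R).
      { apply (Rle_trans _ (f A / f R)); [exact HKR|].
        unfold Rdiv. apply Rmult_le_compat_r;
          [left; now apply Rinv_0_lt_compat | now apply f_mono]. }
      pose proof (Rpower_le_1 (r / R) q ltac:(lra) ltac:(lra) Hq).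
      assert (C' * K * Rpower (r / R) q <= K); [|lra].
      replace (C' * K * Rpower (r / R) q) with (K * (C' * Rpower (r / R) q)) by ring.
      rewrite <- (Rmult_1_r K) at 2. apply Rmult_le_compat_l; nra.
    + specialize (Hbd r A Hr ltac:(lra) ltac:(lra)).
      assert (Rpower (r / R) q <= Rpower (r / A) q).
      { apply Rle_Rpower_l; [exact Hq | split; [lra|]].
        unfold Rdiv. apply Rmult_le_compat_l; [lra|]. apply Rinv_le_contravar; lra. }
      replace (f r / f R) with (f r / f A * (f A / f R)) by (field; lra).
      pose proof (Rpower_pos (r / A) q).
      assert (0 <= f r / f A) by (apply Rlt_le, Rdiv_lt_0_compat; lra).
      assert (C' * Rpower (r / R) q <= f r / f A) by nra.
      assert (0 <= C' * Rpower (r / R) q) by nra.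
      nra.
Qed.

Lemma ratio_upper_rescale (q A B : R) :
  0 <= q -> 0 < A -> 0 < B -> ratio_upper_bound f q A -> ratio_upper_bound f q B.
Proof.
  intros Hq HA HB H. destruct (Rle_dec A B).
  - now apply (ratio_upper_extend q A B).
  - apply (ratio_upper_restrict f q B A); [lra | exact H].
Qed.

Lemma ratio_lower_rescale (q A B : R) :
  0 <= q -> 0 < A -> 0 < B -> ratio_lower_bound f q A -> ratio_lower_bound f q B.
Proof.
  intros Hq HA HB H. destruct (Rle_dec A B).
  - now apply (ratio_lower_extend q A B).
  - apply (ratio_lower_restrict f q B A); [lra | exact H].
Qed.

End MonotoneProfile.

Lemma Rabs_product_increment (x1 y1 x2 y2 Bx By : R) :
  Rabs x1 <= Bx -> Rabs y2 <= By ->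
  Rabs (x2 * y2 - x1 * y1) <= By * Rabs (x2 - x1) + Bx * Rabs (y2 - y1).
Proof.
  intros Hx Hy.
  replace (x2 * y2 - x1 * y1) with ((x2 - x1) * y2 + x1 * (y2 - y1)) by ring.
  eapply Rle_trans; [apply Rabs_triang|]. rewrite !Rabs_mult.
  pose proof (Rabs_pos (x2 - x1)). pose proof (Rabs_pos (y2 - y1)).
  pose proof (Rabs_pos x1). pose proof (Rabs_pos y2). nra.
Qed.

Lemma abs_cont_mult_lipschitz (f g : R -> R) (a b Bf Bg Lg : R) :
  abs_cont_on f a b -> 0 <= Bf -> 0 <= Bg -> 0 <= Lg ->
  (forall r, a <= r <= b -> Rabs (f r) <= Bf) ->
  (forall r, a <= r <= b -> Rabs (g r) <= Bg) ->
  (forall u v, a <= u -> u <= v -> v <= b -> Rabs (g v - g u) <= Lg * (v - u)) ->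
  abs_cont_on (fun r => f r * g r) a b.
Proof.
  intros Hf HBf HBg HLg Hfb Hgb Hglip eps Heps.
  assert (HBL : 0 <= Bf * Lg) by now apply Rmult_le_pos.
  set (e1 := eps / (2 * (Bg + 1))). set (e2 := eps / (2 * (Bf * Lg + 1))).
  assert (He1 : 0 < e1) by (apply Rdiv_lt_0_compat; lra).
  assert (He2 : 0 < e2) by (apply Rdiv_lt_0_compat; lra).
  destruct (Hf e1 He1) as [d1 [Hd1 Hsmall]].
  exists (Rmin d1 e2). split; [now apply Rmin_glb_lt|].
  intros n u v Hin Hord Hlen.
  pose proof (Rmin_l d1 e2). pose proof (Rmin_r d1 e2).
  specialize (Hsmall n u v Hin Hord ltac:(lra)).
  fold (variation f n u v) in Hsmall. fold (total_length n u v) in Hlen.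
  assert (Hsum : variation (fun r => f r * g r) n u v
                 <= Bg * variation f n u v + (Bf * Lg) * total_length n u v).
  { unfold variation, total_length. rewrite <- psum_lin. apply psum_le. intros i Hi.
    destruct (Hin i Hi) as (? & ? & ?).
    eapply Rle_trans; [apply Rabs_product_increment; [apply Hfb | apply Hgb]; lra|].
    assert (Rabs (g (v i) - g (u i)) <= Lg * (v i - u i)) by (apply Hglip; lra).
    assert (0 <= Rabs (f (u i))) by apply Rabs_pos.
    assert (Rabs (f (u i)) <= Bf) by (apply Hfb; lra).
    assert (Rabs (f (u i)) * Rabs (g (v i) - g (u i)) <= Bf * (Lg * (v i - u i))).
    { apply Rmult_le_compat; try lra. apply Rabs_pos. }
    nra. }
  assert (0 <= total_length n u v)
    by (apply psum_nonneg; intros i Hi; destruct (Hin i Hi) as (? & ? & ?); lra).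
  assert (Bg * variation f n u v <= eps / 2).
  { apply (Rle_trans _ (Bg * e1)); [apply Rmult_le_compat_l; lra|].
    unfold e1. apply (Rmult_le_reg_r (2 * (Bg + 1))); [lra|].
    field_simplify; lra. }
  assert (Bf * Lg * total_length n u v < eps / 2).
  { apply (Rle_lt_trans _ (Bf * Lg * e2)); [apply Rmult_le_compat_l; lra|].
    unfold e2. apply (Rmult_lt_reg_r (2 * (Bf * Lg + 1))); [lra|].
    field_simplify; lra. }
  change (variation (fun r => f r * g r) n u v < eps). lra.
Qed.

Lemma cross_mult_le (a b c d : R) : 0 < b -> 0 < d -> (a / b <= c / d <-> a * d <= c * b).
Proof.
  intros Hb Hd. split; intros H.
  - apply (Rmult_le_compat_r (b * d)) in H; [|nra].
    replace (a / b * (b * d)) with (a * d) in H by (field; lra).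
    replace (c / d * (b * d)) with (c * b) in H by (field; lra). exact H.
  - apply (Rmult_le_reg_r (b * d)); [nra|].
    replace (a / b * (b * d)) with (a * d) by (field; lra).
    replace (c / d * (b * d)) with (c * b) by (field; lra). exact H.
Qed.

Lemma weighted_le_ratio (a b r R t : R) : 0 < a -> 0 < b -> 0 < r -> 0 < R ->
  a * Rpower r (- t) <= b * Rpower R (- t) -> a / b <= Rpower (r / R) t.
Proof.
  intros Ha Hb Hr HR H. pose proof (Rpower_pos r t). pose proof (Rpower_pos R t).
  rewrite !Rpower_Ropp in H. rewrite Rpower_div by assumption.
  apply (cross_mult_le a (Rpower r t) b (Rpower R t)) in H; [|lra|lra].
  apply cross_mult_le; lra.
Qed.

Lemma weighted_ge_ratio (a b r R t : R) : 0 < a -> 0 < b -> 0 < r -> 0 < R ->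
  b * Rpower R (- t) <= a * Rpower r (- t) -> a / b >= Rpower (r / R) t.
Proof.
  intros Ha Hb Hr HR H. pose proof (Rpower_pos r t). pose proof (Rpower_pos R t).
  rewrite !Rpower_Ropp in H. rewrite Rpower_div by assumption.
  apply (cross_mult_le b (Rpower R t) a (Rpower r t)) in H; [|lra|lra].
  apply Rle_ge, cross_mult_le; lra.
Qed.

Section AbsolutelyContinuousProfile.

Variable f : R -> R.
Hypothesis f_pos : forall r, 0 < r -> 0 < f r.
Hypothesis f_mono : forall r s, 0 < r -> r <= s -> f r <= f s.
Hypothesis f_ac : loc_abs_cont f.

Lemma weighted_abs_cont (t s r R : R) : (s = 1 \/ s = -1) -> 0 < r -> r < R ->
  abs_cont_on (fun x => f x * (s * Rpower x (- t))) r R.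
Proof.
  intros Hs Hr HrR.
  assert (Habs_s : Rabs s = 1)
    by (destruct Hs as [-> | ->]; [apply Rabs_R1 | rewrite Rabs_left; lra]).
  pose proof (Rpower_pos r (- t)). pose proof (Rpower_pos R (- t)).
  pose proof (Rpower_pos r (- t - 1)). pose proof (Rpower_pos R (- t - 1)).
  pose proof (Rabs_pos (- t)). pose proof (f_pos R ltac:(lra)).
  apply (abs_cont_mult_lipschitz f _ r R (f R) (Rpower r (- t) + Rpower R (- t))
           (Rabs (- t) * (Rpower r (- t - 1) + Rpower R (- t - 1)))).
  - apply f_ac; assumption.
  - lra.
  - lra.
  - apply Rmult_le_pos; lra.
  - intros x Hx. rewrite Rabs_right by (left; apply f_pos; lra). apply f_mono; lra.
  - intros x Hx. rewrite Rabs_mult, Habs_s, Rmult_1_l, Rabs_right by (left; apply Rpower_pos).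
    apply Rpower_between; lra.
  - intros u v Hu Huv Hv.
    replace (s * Rpower v (- t) - s * Rpower u (- t)) with (s * (Rpower v (- t) - Rpower u (- t)))
      by ring.
    rewrite Rabs_mult, Habs_s, Rmult_1_l. now apply Rpower_lipschitz.
Qed.

Lemma weighted_profile_mono (N : R -> Prop) (t s r R : R) :
  (s = 1 \/ s = -1) -> 0 < r -> r < R -> lnull N ->
  (forall x, r <= x <= R -> ~ N x ->
     exists l, derivable_pt_lim f x l /\ 0 <= s * (x * l - t * f x)) ->
  s * (f r * Rpower r (- t)) <= s * (f R * Rpower R (- t)).
Proof.
  intros Hs Hr HrR Hnull Hderiv.
  replace (s * (f r * Rpower r (- t))) with (f r * (s * Rpower r (- t))) by ring.
  replace (s * (f R * Rpower R (- t))) with (f R * (s * Rpower R (- t))) by ring.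
  apply (ac_nonneg_deriv_mono (fun x => f x * (s * Rpower x (- t))) N r R);
    [lra | now apply weighted_abs_cont | exact Hnull |].
  intros x Hx HNx. destruct (Hderiv x Hx HNx) as [l [Hl Hsign]].
  exists (l * (s * Rpower x (- t)) + f x * (s * (- t * Rpower x (- t - 1)))). split.
  - apply (derivable_pt_lim_mult f (fun y => s * Rpower y (- t))); [exact Hl|].
    apply (derivable_pt_lim_scal (fun y => Rpower y (- t))), derivable_pt_lim_power. lra.
  - assert (Hpow : Rpower x (- t - 1) = Rpower x (- t) / x).
    { unfold Rpower. replace ((- t - 1) * ln x) with (- t * ln x + - ln x) by ring.
      rewrite exp_plus, exp_Ropp, exp_ln by lra. reflexivity. }
    rewrite Hpow.
    replace (l * (s * Rpower x (- t)) + f x * (s * (- t * (Rpower x (- t) / x))))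
      with ((Rpower x (- t) / x) * (s * (x * l - t * f x))) by (field; lra).
    apply Rmult_le_pos; [apply Rlt_le, Rdiv_lt_0_compat; [apply Rpower_pos | lra] | exact Hsign].
Qed.

Lemma ess_ge_ratio_upper (t : R) :
  ess_ge_near0 f t -> exists D, 0 < D /\ ratio_upper_bound f t D.
Proof.
  intros [del [Hdel Hnull]]. exists (del / 2). split; [lra|].
  exists 1. split; [lra|]. intros r R Hr HrR HR. rewrite Rmult_1_l.
  apply weighted_le_ratio; try (apply f_pos; lra); try lra.
  assert (H := weighted_profile_mono _ t 1 r R (or_introl eq_refl) Hr HrR Hnull).
  rewrite !Rmult_1_l in H. apply H.
  intros x Hx HNx.
  assert (Hgood : exists l, derivable_pt_lim f x l /\ t <= x * l / f x)
    by (apply NNPP; intros Hn; apply HNx; repeat split; lra || exact Hn).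
  destruct Hgood as [l [Hl Hratio]]. exists l. split; [exact Hl|].
  pose proof (f_pos x ltac:(lra)).
  apply (Rmult_le_compat_r (f x)) in Hratio; [|lra].
  replace (x * l / f x * f x) with (x * l) in Hratio by (field; lra). lra.
Qed.

Lemma ess_le_ratio_lower (t : R) :
  ess_le_near0 f t -> exists D, 0 < D /\ ratio_lower_bound f t D.
Proof.
  intros [del [Hdel Hnull]]. exists (del / 2). split; [lra|].
  exists 1. split; [lra|]. intros r R Hr HrR HR. rewrite Rmult_1_l.
  apply weighted_ge_ratio; try (apply f_pos; lra); try lra.
  assert (H := weighted_profile_mono _ t (-1) r R (or_intror eq_refl) Hr HrR Hnull).
  cut (-1 * (f r * Rpower r (- t)) <= -1 * (f R * Rpower R (- t))); [lra|]. apply H.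
  intros x Hx HNx.
  assert (Hgood : exists l, derivable_pt_lim f x l /\ x * l / f x <= t)
    by (apply NNPP; intros Hn; apply HNx; repeat split; lra || exact Hn).
  destruct Hgood as [l [Hl Hratio]]. exists l. split; [exact Hl|].
  pose proof (f_pos x ltac:(lra)).
  apply (Rmult_le_compat_r (f x)) in Hratio; [|lra].
  replace (x * l / f x * f x) with (x * l) in Hratio by (field; lra). lra.
Qed.

End AbsolutelyContinuousProfile.

Lemma ER_lt_not_ge (x y : ER) : ER_lt x y -> ~ ER_le y x.
Proof.
  intros [Hxy Hne] Hyx. apply Hne.
  destruct x, y; simpl in *; try contradiction; try reflexivity. f_equal; lra.
Qed.

Lemma sup_exceeded (P : R -> Prop) (L : ER) (p : R) :
  is_sup (fun e => exists t, e = Fin t /\ P t) L -> ~ ER_le L (Fin p) ->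
  exists t, P t /\ p < t.
Proof.
  intros [_ Hleast] Hn. apply NNPP; intros Hno. apply Hn, Hleast.
  intros e [t [-> Ht]]. simpl. apply Rnot_lt_le; intros Hlt. apply Hno; eauto.
Qed.

Lemma inf_undercut (P : R -> Prop) (U : ER) (p : R) :
  is_inf (fun e => exists t, e = Fin t /\ P t) U -> ~ ER_le (Fin p) U ->
  exists t, P t /\ t < p.
Proof.
  intros [_ Hgreatest] Hn. apply NNPP; intros Hno. apply Hn, Hgreatest.
  intros e [t [-> Ht]]. simpl. apply Rnot_lt_le; intros Hlt. apply Hno; eauto.
Qed.

Section EssentialLimits.

Variable f : R -> R.
Hypothesis f_pos : forall r, 0 < r -> 0 < f r.
Hypothesis f_mono : forall r s, 0 < r -> r <= s -> f r <= f s.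
Hypothesis f_ac : loc_abs_cont f.

(* Essential upper bounds of r f'(r)/f(r) near 0 are nonnegative, since
   f is nondecreasing. *)
Lemma ess_le_nonneg (t : R) : ess_le_near0 f t -> 0 <= t.
Proof.
  intros Ht. destruct (ess_le_ratio_lower f f_pos f_mono f_ac t Ht) as [D [HD Hlow]].
  apply Rnot_lt_le; intros Hneg.
  exact (ratio_bounds_incompatible f 0 t D HD Hneg (ratio_upper_exponent_0 f f_pos f_mono D) Hlow).
Qed.

Lemma ratio_upper_below_liminf (L : ER) (p : R) :
  is_ess_liminf f L -> ER_lt (Fin p) L -> exists D, 0 < D /\ ratio_upper_bound f p D.
Proof.
  intros HL HpL. destruct (sup_exceeded _ L p HL (ER_lt_not_ge _ _ HpL)) as [t [Ht Hpt]].
  destruct (ess_ge_ratio_upper f f_pos f_mono f_ac t Ht) as [D [HD Hup]].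
  exists D. split; [exact HD|]. apply (ratio_upper_lower_exponent f p t D); [lra | exact Hup].
Qed.

Lemma ratio_lower_above_limsup (U : ER) (p : R) :
  is_ess_limsup f U -> ER_lt U (Fin p) -> 0 < p /\ exists D, 0 < D /\ ratio_lower_bound f p D.
Proof.
  intros HU HUp. destruct (inf_undercut _ U p HU (ER_lt_not_ge _ _ HUp)) as [t [Ht Htp]].
  pose proof (ess_le_nonneg t Ht).
  destruct (ess_le_ratio_lower f f_pos f_mono f_ac t Ht) as [D [HD Hlow]].
  split; [lra|]. exists D. split; [exact HD|].
  apply (ratio_lower_raise_exponent f p t D); [lra | exact Hlow].
Qed.

Lemma upper_exponent_le_limsup (U : ER) (p A : R) :
  is_ess_limsup f U -> 0 <= p -> 0 < A -> ratio_upper_bound f p A -> ER_le (Fin p) U.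
Proof.
  intros HU Hp HA Hup. apply NNPP; intros Hn.
  destruct (inf_undercut _ U p HU Hn) as [t [Ht Htp]].
  destruct (ess_le_ratio_lower f f_pos f_mono f_ac t Ht) as [D [HD Hlow]].
  apply (ratio_bounds_incompatible f p t D HD Htp); [|exact Hlow].
  exact (ratio_upper_rescale f f_pos f_mono p A D Hp HA HD Hup).
Qed.

Lemma liminf_le_lower_exponent (L : ER) (p A : R) :
  is_ess_liminf f L -> 0 <= p -> 0 < A -> ratio_lower_bound f p A -> ER_le L (Fin p).
Proof.
  intros HL Hp HA Hlow. apply NNPP; intros Hn.
  destruct (sup_exceeded _ L p HL Hn) as [t [Ht Hpt]].
  destruct (ess_ge_ratio_upper f f_pos f_mono f_ac t Ht) as [D [HD Hup]].
  apply (ratio_bounds_incompatible f t p D HD Hpt Hup).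
  exact (ratio_lower_rescale f f_pos f_mono p A D Hp HA HD Hlow).
Qed.

End EssentialLimits.

Theorem lemma2p5 (X : Type) (d : X -> X -> R) (M : (X -> Prop) -> Prop)
  (mu : (X -> Prop) -> ER) (x : X) (q R0 : R) :
  is_metric d ->
  is_complete_borel_measure d M mu ->
  balls_pos_finite d mu ->
  0 < q -> 0 < R0 ->
  ((Qlow d mu x q <->
     exists C, 0 < C /\ forall r R, 0 < r -> r < R -> R <= R0 ->
       ball_meas d mu x r / ball_meas d mu x R <= C * Rpower (r / R) q) /\
   (Qup d mu x q <->
     exists C, 0 < C /\ forall r R, 0 < r -> r < R -> R <= R0 ->
       ball_meas d mu x r / ball_meas d mu x R >= C * Rpower (r / R) q)) /\
  (loc_abs_cont (ball_meas d mu x) ->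
   forall L U : ER,
     is_ess_liminf (ball_meas d mu x) L ->
     is_ess_limsup (ball_meas d mu x) U ->
     (forall p, 0 < p -> ER_lt (Fin p) L -> Qlow d mu x p) /\
     (forall p, Qlow d mu x p -> 0 < p /\ ER_le (Fin p) U) /\
     (forall p, ER_lt U (Fin p) -> Qup d mu x p) /\
     (forall p, Qup d mu x p -> ER_le L (Fin p))).
Proof.
  intros Hd Hm Hb Hq HR0.
  set (f := ball_meas d mu x).
  assert (f_pos : forall r, 0 < r -> 0 < f r) by (intros r Hr; now apply ball_meas_spec).
  assert (f_mono : forall r s, 0 < r -> r <= s -> f r <= f s)
    by (intros r s Hr Hrs; now apply (ball_meas_mono d M mu)).
  split; [split; split|].
  - intros [_ H]. exact (ratio_upper_rescale f f_pos f_mono q 1 R0 ltac:(lra) ltac:(lra) HR0 H).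
  - intros H. split; [exact Hq|].
    exact (ratio_upper_rescale f f_pos f_mono q R0 1 ltac:(lra) HR0 ltac:(lra) H).
  - intros [_ H]. exact (ratio_lower_rescale f f_pos f_mono q 1 R0 ltac:(lra) ltac:(lra) HR0 H).
  - intros H. split; [exact Hq|].
    exact (ratio_lower_rescale f f_pos f_mono q R0 1 ltac:(lra) HR0 ltac:(lra) H).
  - intros f_ac L U HL HU. split; [|split; [|split]].
    + intros p Hp HpL. split; [exact Hp|].
      destruct (ratio_upper_below_liminf f f_pos f_mono f_ac L p HL HpL) as [D [HD Hup]].
      exact (ratio_upper_rescale f f_pos f_mono p D 1 ltac:(lra) HD ltac:(lra) Hup).
    + intros p [Hp Hup]. split; [exact Hp|].
      exact (upper_exponent_le_limsup f f_pos f_mono f_ac U p 1 HU ltac:(lra) ltac:(lra) Hup).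
    + intros p HUp.
      destruct (ratio_lower_above_limsup f f_pos f_mono f_ac U p HU HUp) as [Hp [D [HD Hlow]]].
      split; [exact Hp|].
      exact (ratio_lower_rescale f f_pos f_mono p D 1 ltac:(lra) HD ltac:(lra) Hlow).
    + intros p [Hp Hlow].
      exact (liminf_le_lower_exponent f f_pos f_mono f_ac L p 1 HL ltac:(lra) ltac:(lra) Hlow).
Qed.
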